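(* Let $T$ be the DFS tree produced by DFS-v1 or DFS-v2 on a temporal graph $G$ from source $s$ with starting time $t_s$. Then no root-to-leaf path of $T$ contains two distinct occurrences of the same vertex of $G$; equivalently, no vertex of $G$ is, along a single root-to-leaf path, both an ancestor and a descendant of an occurrence of another vertex.
   Context: A temporal graph is a pair $G=(V,E)$ where $V$ is a finite set of vertices and $E$ is a finite set of temporal edges, i.e. triples $(u,v,t)$ with $u,v\in V$, $u\neq v$, $t\in\mathbb{R}$ (the time at which the edge is active); distinct elements of $E$ are distinct triples. Fix a starting time $t_s\in\mathbb{R}$ and a source vertex $s\in V$. Temporal DFS (versions v1 and v2). The procedure maintains a value $\sigma(x)\in\mathbb{R}\cup\{\infty\}$ for every $x\in V$, initially $\infty$, and a set of already traversed edges, initially empty, and builds a rooted tree $T$ whose nodes are occurrences of vertices of $G$ (a vertex may occur several times in $T$). Each occurrence carries a label, namely the value assigned to $\sigma(x)$ when that occurrence was created. Start: create the root occurrence of $s$, set $\sigma(s)=t_s$ (its label), and make it the current occurrence. Step (a): let $u$ be the vertex of the current occurrence, $\sigma_u$ its label, and $A$ the set of edges $(u,v,t)\in E$ not yet traversed with $\sigma_u\le t$. If $A=\emptyset$: if the current occurrence is the root, terminate; otherwise make its parent occurrence current (backtrack) and repeat step (a). If $A\neq\emptyset$, select an edge $e=(u,v,t)\in A$ by the selection rule, mark $e$ as traversed and go to step (b). Step (b): if the current value $\sigma(v)$ satisfies $\sigma(v)>t$, create a new occurrence of $v$ as a child of the current occurrence, set $\sigma(v):=t$ (so the new occurrence has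 label $t$), call $e$ a tree edge, make the new occurrence current and go to step (a); otherwise go to step (a) with the same current occurrence. Selection rule of DFS-v1: choose any vertex $v$ such that $A$ contains an edge to $v$, and select the edge of $A$ to $v$ with the smallest time. Selection rule of DFS-v2: select an edge of $A$ with the largest time. All remaining choices are arbitrary. $T$ is the DFS tree; its edges are the tree edges. *)

From Stdlib Require Import Reals List Relations.
Import ListNotations.
Open Scope R_scope.
Set Implicit Arguments.

Definition tedge (V : Type) := (V * V * R)%type.

(* An occurrence of a vertex in the DFS tree: vertex, label, parent index
   (occurrences are numbered by their position in the list of occurrences;
   the root has index 0 and no parent). *)
Record occ (V : Type) := mkOcc { o_vert : V; o_label : R; o_parent : option nat }.

(* State of the temporal DFS: occurrences created so far (the tree T),
   current occurrence, the values sigma (None = infinity), traversed edges. *)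
Record state (V : Type) := mkState {
  occs : list (occ V);
  cur : nat;
  sigma : V -> option R;
  trav : list (tedge V) }.

Inductive dfs_rule := DFSv1 | DFSv2.

Section DFS.
Variable V : Type.
Variable Veq : forall x y : V, {x = y} + {x <> y}.

Definition upd (f : V -> option R) (v : V) (t : R) : V -> option R :=
  fun x => if Veq x v then Some t else f x.

Definition avail (E : list (tedge V)) (st : state V) (o : occ V) (e : tedge V) : Prop :=
  In e E /\ ~ In e (trav st) /\
  (let '(u, _, t) := e in u = o_vert o /\ o_label o <= t).

Definition selected (r : dfs_rule) (E : list (tedge V)) (st : state V) (o : occ V)
  (e : tedge V) : Prop :=
  avail E st o e /\
  match r with
  | DFSv1 => forall e', avail E st o e' -> snd (fst e') = snd (fst e) -> snd e <= snd e'
  | DFSv2 => forall e', avail E st o e' -> snd e' <= snd e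
  end.

Definition sigma_gt (x : option R) (t : R) : Prop :=
  match x with None => True | Some y => t < y end.

Definition init_state (s : V) (ts : R) : state V :=
  mkState [mkOcc s ts None] 0 (upd (fun _ => None) s ts) [].

Inductive dfs_step (r : dfs_rule) (E : list (tedge V)) : state V -> state V -> Prop :=
| step_back : forall st o p,
    nth_error (occs st) (cur st) = Some o ->
    (forall e, ~ avail E st o e) ->
    o_parent o = Some p ->
    dfs_step r E st (mkState (occs st) p (sigma st) (trav st))
| step_tree : forall st o u v t,
    nth_error (occs st) (cur st) = Some o ->
    selected r E st o (u, v, t) ->
    sigma_gt (sigma st v) t ->
    dfs_step r E st
      (mkState (occs st ++ [mkOcc v t (Some (cur st))]) (length (occs st))
               (upd (sigma st) v t) ((u, v, t) :: trav st))
| step_nontree : forall st o u v t,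
    nth_error (occs st) (cur st) = Some o ->
    selected r E st o (u, v, t) ->
    ~ sigma_gt (sigma st v) t ->
    dfs_step r E st (mkState (occs st) (cur st) (sigma st) ((u, v, t) :: trav st)).

Definition terminal (E : list (tedge V)) (st : state V) : Prop :=
  exists o, nth_error (occs st) (cur st) = Some o /\ o_parent o = None /\
            (forall e, ~ avail E st o e).

End DFS.

Definition parent_of (V : Type) (l : list (occ V)) (i j : nat) : Prop :=
  exists o, nth_error l j = Some o /\ o_parent o = Some i.

Definition ancestor (V : Type) (l : list (occ V)) : nat -> nat -> Prop :=
  clos_trans nat (parent_of l).

From Pilot Require Import Defs.
From Stdlib Require Import Reals List Relations Lia Lra.
Import ListNotations.
Open Scope R_scope.

(* Three facts hold in every state reachable from the initial one:
   (1) labels never decrease from parent to child occurrence (a tree edge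
       (u,v,t) is only taken from an occurrence of u with label <= t);
   (2) sigma(x) is at most the label of every occurrence of x (sigma only
       ever decreases, and a new occurrence gets exactly the new value);
   (3) no vertex occurs twice on a root-to-leaf path.
   (3) is preserved when a new occurrence of v with label t is attached
   below the current occurrence o: by (1) every occurrence on the path from
   the root to o has label <= label(o) <= t < sigma(v), while by (2) an
   occurrence of v would have label >= sigma(v). *)

Section Trees.
Context {V : Type}.
Implicit Types (l : list (occ V)) (x o : occ V).

Definition monotone_tree l : Prop :=
  forall j o p, nth_error l j = Some o -> o_parent o = Some p ->
    (p < j)%nat /\ exists op, nth_error l p = Some op /\ o_label op <= o_label o.

Lemma nth_error_snoc_last l x : nth_error (l ++ [x]) (length l) = Some x.
Proof. rewrite nth_error_app2, Nat.sub_diag by lia. reflexivity. Qed.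

Lemma nth_error_snoc_inv {l x j o} :
  nth_error (l ++ [x]) j = Some o ->
  ((j < length l)%nat /\ nth_error l j = Some o) \/ (j = length l /\ o = x).
Proof.
  intros H. destruct (Nat.lt_ge_cases j (length l)) as [Hj|Hj].
  - left. rewrite nth_error_app1 in H by exact Hj. auto.
  - right. rewrite nth_error_app2 in H by exact Hj.
    destruct (j - length l)%nat as [|k] eqn:Hk; simpl in H.
    + injection H as <-. split; [lia | reflexivity].
    + destruct k; discriminate.
Qed.

Lemma ancestor_monotone {l} (Hmono : monotone_tree l) {i j} :
  ancestor l i j -> (i < j)%nat /\
    forall oi oj, nth_error l i = Some oi -> nth_error l j = Some oj ->
      o_label oi <= o_label oj.
Proof.
  induction 1 as [a b [o [Ho Hpar]] | a b c _ [Hab IHab] _ [Hbc IHbc]].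
  - destruct (Hmono _ _ _ Ho Hpar) as [Hlt [op [Hop Hle]]].
    split; [exact Hlt |]. intros oi oj Hi Hj.
    rewrite Hi in Hop. rewrite Hj in Ho. congruence.
  - split; [lia |]. intros oi oj Hi Hj.
    destruct (nth_error l b) as [ob|] eqn:Hb.
    + specialize (IHab _ _ Hi eq_refl). specialize (IHbc _ _ eq_refl Hj). lra.
    + apply nth_error_None in Hb.
      assert (Hc : nth_error l c <> None) by congruence.
      apply nth_error_Some in Hc. lia.
Qed.

Lemma ancestor_snoc_old {l x} (Hmono : monotone_tree (l ++ [x])) {i j} :
  ancestor (l ++ [x]) i j -> (j < length l)%nat -> ancestor l i j.
Proof.
  induction 1 as [a b [o [Ho Hpar]] | a b c Hab IHab Hbc IHbc]; intros Hlt.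
  - rewrite nth_error_app1 in Ho by exact Hlt. apply t_step. exists o. auto.
  - pose proof (proj1 (ancestor_monotone Hmono Hbc)).
    apply t_trans with b; [apply IHab; lia | apply IHbc; exact Hlt].
Qed.

Lemma ancestor_snoc_new {l x p} (Hmono : monotone_tree (l ++ [x])) {i} :
  o_parent x = Some p -> ancestor (l ++ [x]) i (length l) ->
  i = p \/ ancestor l i p.
Proof.
  intros Hpx H. apply clos_trans_tn1 in H.
  assert (Hparent : forall b, parent_of (l ++ [x]) b (length l) -> b = p).
  { intros b [o [Ho Hpar]]. rewrite nth_error_snoc_last in Ho. congruence. }
  inversion H as [b Hpb | b c Hpb Hrest]; subst.
  - left. auto.
  - right. apply Hparent in Hpb. subst b.
    assert (Hp : (p < length l)%nat).
    { apply (Hmono _ _ _ (nth_error_snoc_last l x) Hpx). }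
    apply clos_tn1_trans in Hrest. exact (ancestor_snoc_old Hmono Hrest Hp).
Qed.

Lemma monotone_tree_snoc {l x p op} :
  monotone_tree l -> o_parent x = Some p -> nth_error l p = Some op ->
  o_label op <= o_label x -> monotone_tree (l ++ [x]).
Proof.
  intros Hmono Hpx Hp Hle j o q Ho Hq.
  assert (Hpl : (p < length l)%nat) by (apply nth_error_Some; congruence).
  destruct (nth_error_snoc_inv Ho) as [[Hj Ho'] | [-> ->]].
  - destruct (Hmono _ _ _ Ho' Hq) as [Hlt [oq [Hoq Hle']]].
    split; [exact Hlt |]. exists oq. rewrite nth_error_app1 by lia. auto.
  - rewrite Hpx in Hq. injection Hq as <-. split; [exact Hpl |].
    exists op. rewrite nth_error_app1 by exact Hpl. auto.
Qed.

End Trees.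

Section Invariant.
Context {V : Type} {Veq : forall x y : V, {x = y} + {x <> y}}
        {E : list (tedge V)} {r : dfs_rule}.

Record dfs_invariant (st : state V) : Prop := {
  cur_in_tree : (cur st < length (occs st))%nat;
  tree_monotone : monotone_tree (occs st);
  sigma_below_labels : forall j o, nth_error (occs st) j = Some o ->
    exists y, Defs.sigma st (o_vert o) = Some y /\ y <= o_label o;
  no_repeat_on_paths : forall i j oi oj, ancestor (occs st) i j ->
    nth_error (occs st) i = Some oi -> nth_error (occs st) j = Some oj ->
    o_vert oi <> o_vert oj }.

Arguments cur_in_tree {st}.
Arguments tree_monotone {st}.
Arguments sigma_below_labels {st}.
Arguments no_repeat_on_paths {st}.

Lemma invariant_init s ts : dfs_invariant (init_state Veq s ts).
Proof.
  assert (Hroot : forall j o, nth_error [mkOcc s ts None] j = Some o ->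
                    o = mkOcc s ts None).
  { intros [|[|j]] o Ho; simpl in Ho; congruence. }
  constructor; simpl.
  - lia.
  - intros j o p Ho Hp. rewrite (Hroot _ _ Ho) in Hp. discriminate.
  - intros j o Ho. rewrite (Hroot _ _ Ho). simpl. unfold upd.
    destruct (Veq s s) as [_|]; [| congruence]. exists ts. split; [reflexivity | lra].
  - intros i j oi oj H. exfalso.
    induction H as [a b [o [Ho Hp]] |]; [| assumption].
    rewrite (Hroot _ _ Ho) in Hp. discriminate.
Qed.

Lemma path_to_current_avoids {st o v t} :
  dfs_invariant st -> nth_error (occs st) (cur st) = Some o ->
  o_label o <= t -> sigma_gt (Defs.sigma st v) t ->
  forall i oi, (i = cur st \/ ancestor (occs st) i (cur st)) ->
    nth_error (occs st) i = Some oi -> o_vert oi <> v.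
Proof.
  intros Hinv Ho Hlab Hgt i oi Hi Hoi Hv.
  assert (Hle : o_label oi <= o_label o).
  { destruct Hi as [-> | Ha].
    - rewrite Hoi in Ho. injection Ho as ->. lra.
    - exact (proj2 (ancestor_monotone (tree_monotone Hinv) Ha) _ _ Hoi Ho). }
  destruct (sigma_below_labels Hinv _ _ Hoi) as [y [Hy Hyl]].
  rewrite <- Hv, Hy in Hgt. simpl in Hgt. lra.
Qed.

Lemma invariant_step_tree {st o u v t} :
  dfs_invariant st -> nth_error (occs st) (cur st) = Some o ->
  selected r E st o (u, v, t) -> sigma_gt (Defs.sigma st v) t ->
  dfs_invariant (mkState (occs st ++ [mkOcc v t (Some (cur st))])
                   (length (occs st)) (upd Veq (Defs.sigma st) v t)
                   ((u, v, t) :: trav st)).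
Proof.
  intros Hinv Ho [[_ [_ [_ Hlab]]] _] Hgt.
  set (x := mkOcc v t (Some (cur st))).
  assert (Hmono : monotone_tree (occs st ++ [x])).
  { exact (monotone_tree_snoc (x := x) (tree_monotone Hinv) eq_refl Ho Hlab). }
  constructor; simpl.
  - rewrite length_app. simpl. lia.
  - exact Hmono.
  - intros j o' Ho'. unfold upd.
    destruct (nth_error_snoc_inv Ho') as [[_ Hold] | [_ ->]].
    + destruct (sigma_below_labels Hinv _ _ Hold) as [y [Hy Hyl]].
      destruct (Veq (o_vert o') v) as [Heq | Hne].
      * exists t. split; [reflexivity |].
        rewrite Heq in Hy. rewrite Hy in Hgt. simpl in Hgt. lra.
      * exists y. auto.
    + simpl. destruct (Veq v v) as [_|]; [| congruence].
      exists t. split; [reflexivity | lra].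
  - intros i j oi oj H Hi Hj.
    destruct (nth_error_snoc_inv Hj) as [[Hjl Hold] | [-> ->]].
    + assert (Hil : (i < length (occs st))%nat)
        by (pose proof (proj1 (ancestor_monotone Hmono H)); lia).
      rewrite nth_error_app1 in Hi by exact Hil.
      exact (no_repeat_on_paths Hinv _ _ _ _ (ancestor_snoc_old Hmono H Hjl) Hi Hold).
    + assert (Hic := ancestor_snoc_new (p := cur st) Hmono eq_refl H).
      assert (Hil : (i < length (occs st))%nat).
      { destruct Hic as [-> | Ha]; [exact (cur_in_tree Hinv) |].
        pose proof (proj1 (ancestor_monotone (tree_monotone Hinv) Ha)).
        pose proof (cur_in_tree Hinv). lia. }
      rewrite nth_error_app1 in Hi by exact Hil.
      exact (path_to_current_avoids Hinv Ho Hlab Hgt _ _ Hic Hi).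
Qed.

Lemma invariant_step {st st'} :
  dfs_step Veq r E st st' -> dfs_invariant st -> dfs_invariant st'.
Proof.
  intros Hs Hinv. destruct Hs as
    [st o p Ho _ Hpar | st o u v t Ho Hsel Hgt | st o u v t _ _ _].
  - destruct Hinv as [Hc Hmono Hsig Hrep].
    destruct (Hmono _ _ _ Ho Hpar) as [Hlt _].
    constructor; simpl; auto. lia.
  - exact (invariant_step_tree Hinv Ho Hsel Hgt).
  - destruct Hinv. constructor; simpl; auto.
Qed.

Lemma invariant_reachable {s ts st} :
  clos_refl_trans_1n (state V) (dfs_step Veq r E) (init_state Veq s ts) st ->
  dfs_invariant st.
Proof.
  intros Hrun. apply clos_rt1n_rt, clos_rt_rtn1 in Hrun.
  induction Hrun as [| st1 st2 Hstep _ IH].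
  - apply invariant_init.
  - exact (invariant_step Hstep IH).
Qed.

End Invariant.

Theorem lemma4 (V : Type) (Veq : forall x y : V, {x = y} + {x <> y})
  (Vl : list V) (HVfin : forall x : V, In x Vl)
  (E : list (tedge V)) (HEnodup : NoDup E)
  (HEloop : forall u v t, In (u, v, t) E -> u <> v)
  (s : V) (ts : R) (r : dfs_rule) (st : state V)
  (Hrun : clos_refl_trans_1n (state V) (dfs_step Veq r E) (init_state Veq s ts) st)
  (Hterm : terminal E st) :
  forall (i j : nat) (oi oj : occ V),
    ancestor (occs st) i j ->
    nth_error (occs st) i = Some oi ->
    nth_error (occs st) j = Some oj ->
    o_vert oi <> o_vert oj.
Proof.
  exact (no_repeat_on_paths _ (invariant_reachable Hrun)).
Qed.
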